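(* Let $(Sm(n))_{n\geqslant 0}$ be the sequence of Smarandache numbers, where $Sm(n)$ is the integer whose decimal expansion is the concatenation of $1,2,\ldots,n+1$ (so $Sm(0)=1$, $Sm(1)=12$, $Sm(2)=123$, $\ldots$). Let $l$ be a positive integer. Then for every integer $n\geqslant 0$ such that the integers $n+2$, $n+3$, $n+4$ (the numbers appended when passing from $Sm(n)$ to $Sm(n+3)$) all have exactly $l$ decimal digits, we have $$Sm(n+3) - (10^l+2)\, Sm(n+2) + (2\cdot 10^l + 1)\, Sm(n+1) - 10^l\, Sm(n) = 0.$$
   Context: For integers $a\geqslant 0$ and $b\geqslant 1$, the (decimal) concatenation of $a$ and $b$ is $a\cdot 10^{k}+b$, where $k$ is the number of decimal digits of $b$; so $Sm(n+1)=Sm(n)\cdot 10^{k}+(n+2)$ with $k$ the number of digits of $n+2$. *)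

From mathcomp Require Import all_boot all_order all_algebra.
Set Implicit Arguments. Unset Strict Implicit. Unset Printing Implicit Defensive.
Import Order.TTheory GRing.Theory Num.Theory.

(* Number of decimal digits of a natural number b (for b >= 1);
   ndigits_aux uses fuel b, enough since each step divides by 10. *)
Fixpoint ndigits_aux (fuel b : nat) : nat :=
  match fuel with
  | 0 => 0
  | fuel'.+1 => if b < 10 then 1 else (ndigits_aux fuel' (b %/ 10)).+1
  end.

Definition ndigits (b : nat) : nat := ndigits_aux b b.

Definition concat (a b : nat) : nat := a * 10 ^ ndigits b + b.

Fixpoint Sm (n : nat) : nat :=
  match n with
  | 0 => 1
  | n'.+1 => concat (Sm n') n'.+2
  end.

Example ndigits_test : [:: ndigits 1; ndigits 9; ndigits 10; ndigits 99; ndigits 100; ndigits 1234] = [:: 1; 1; 2; 2; 3; 4].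
Proof. by []. Qed.
Example Sm_test : [:: Sm 0; Sm 1; Sm 2; Sm 3] = [:: 1; 12; 123; 1234].
Proof. by []. Qed.

(* Writing b = 10^l, every step in the range satisfies Sm (k+1) = b Sm k + (k+2),
   so d k := Sm (k+1) - b Sm k is affine in k and its second difference vanishes.
   Expanding d (n+2) - 2 d (n+1) + d n gives the recurrence, whose characteristic
   polynomial is (x - 1)^2 (x - b). *)
From mathcomp Require Import all_boot all_order all_algebra.
From mathcomp Require Import ring.
Import Order.TTheory GRing.Theory Num.Theory.
Local Open Scope ring_scope.

Lemma recurrence_of_affine_increments (R : comPzRingType) (b c s0 s1 s2 s3 : R) :
  s1 = s0 * b + c -> s2 = s1 * b + (c + 1) -> s3 = s2 * b + (c + 2) ->
  s3 - (b + 2) * s2 + (2 * b + 1) * s1 - b * s0 = 0.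
Proof. by move=> -> -> ->; ring. Qed.

Lemma SmS (n : nat) : Sm n.+1 = (Sm n * 10 ^ ndigits n.+2 + n.+2)%N.
Proof. by []. Qed.

Lemma SmS_int {l n : nat} : ndigits n.+2 = l ->
  (Sm n.+1)%:Z = (Sm n)%:Z * (10 ^ l)%:Z + n.+2%:Z.
Proof. by move=> ndigits_l; rewrite SmS ndigits_l PoszD PoszM. Qed.

Theorem lemma1 (l : nat) (hl : (0 < l)%N) (n : nat)
  (h2 : ndigits n.+2 = l) (h3 : ndigits n.+3 = l) (h4 : ndigits n.+4 = l) :
  (Sm n.+3)%:Z - ((10 ^ l + 2)%N)%:Z * (Sm n.+2)%:Z
    + ((2 * 10 ^ l + 1)%N)%:Z * (Sm n.+1)%:Z - ((10 ^ l)%N)%:Z * (Sm n)%:Z = 0.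
Proof.
have e2 : (Sm n.+2)%:Z = (Sm n.+1)%:Z * (10 ^ l)%:Z + (n.+2%:Z + 1).
  by rewrite (SmS_int h3) -[n.+3]addn1 PoszD.
have e3 : (Sm n.+3)%:Z = (Sm n.+2)%:Z * (10 ^ l)%:Z + (n.+2%:Z + 2).
  by rewrite (SmS_int h4) -[n.+4]addn2 PoszD.
rewrite !PoszD PoszM.
exact: recurrence_of_affine_increments (SmS_int h2) e2 e3.
Qed.
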